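(* Let $G$ be a tree on $k\ge 2$ vertices and $n\ge 1$. If $G$ has a perfect matching, then the number of perfect matchings of $\Gamma^G_n$ (with loops ignored and parallel edges counted as distinct edges) is $$2^{\frac{k}{2(k-1)}\left(k^n-2k^{n-1}+1\right)} ;$$ if $G$ has no perfect matching, then $\Gamma^G_n$ has no perfect matching.
   Context: Let $G=(V,E)$ be a finite tree with vertex set $V$ of size $k$, and fix an orientation of each edge, so that each edge becomes an ordered pair $e=(s,t)$. Each oriented edge $e=(s,t)$ acts on the set $V^*$ of finite words over the alphabet $V$ by the recursive rule: $e(\emptyset)=\emptyset$, $e(sw)=t\,e(w)$, $e(tw)=sw$, and $e(xw)=xw$ for $x\in V\setminus\{s,t\}$ (words are read left to right, $w\in V^*$). This action preserves word length. For $n\ge 1$, the Schreier graph $\Gamma_n^G$ is the multigraph with vertex set $V^n$ having, for each $u\in V^n$ and each oriented edge $e$ of $G$, one edge joining $u$ and $e(u)$, labelled $e$ (a loop if $e(u)=u$). A perfect matching of a graph is a set $M$ of non-loop edges such that every vertex is incident to exactly one edge of $M$. *)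

From mathcomp Require Import all_boot.
Set Implicit Arguments. Unset Strict Implicit. Unset Printing Implicit Defensive.

(* A tree G = (V,E) with a fixed orientation of each edge is given by a finite
   vertex type V and a list E of oriented edges (s,t). *)
Section Defs.
Variable V : finType.
Variable E : seq (V * V).

Definition edge (i : 'I_(size E)) : V * V := tnth (in_tuple E) i.

Definition adj : rel V := fun x y => ((x, y) \in E) || ((y, x) \in E).

Definition is_tree : Prop :=
  [/\ uniq E,
      forall x y, (x, y) \in E -> x != y,
      forall x y, (x, y) \in E -> (y, x) \notin E,
      forall x y, connect adj x y
    & size E = #|V|.-1].

Definition tree_has_pm : Prop :=
  exists M : {set 'I_(size E)},
    forall v : V, #|[set i in M | (v == (edge i).1) || (v == (edge i).2)]| = 1.

Fixpoint act (s t : V) (w : seq V) : seq V :=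
  match w with
  | [::] => [::]
  | x :: w' => if x == s then t :: act s t w'
               else if x == t then s :: w' else x :: w'
  end.

(* Schreier graph Gamma_n: vertices V^n (n-tuples), and for each u in V^n and
   each oriented edge e (index i) one edge (u,i) joining u and e(u). *)
Definition sedge (n : nat) := (n.-tuple V * 'I_(size E))%type.

Definition sincident (n : nat) (v : n.-tuple V) (x : sedge n) : bool :=
  (v == x.1) || (val v == act (edge x.2).1 (edge x.2).2 (val x.1)).

Definition sloop (n : nat) (x : sedge n) : bool :=
  act (edge x.2).1 (edge x.2).2 (val x.1) == val x.1.

Definition schreier_pm (n : nat) (M : {set sedge n}) : bool :=
  [forall x, (x \in M) ==> ~~ sloop x] &&
  [forall v : n.-tuple V, #|[set x in M | sincident v x]| == 1].

End Defs.

From mathcomp Require Import all_boot zify.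
Set Implicit Arguments. Unset Strict Implicit. Unset Printing Implicit Defensive.

(* A perfect matching P of Gamma_n induces weights on the edges of G: the number
   of edges of P carrying each label. Counting the edges of P at the words with
   first letter x shows that the weights around every vertex x of G add up to
   k^(n-1); on a tree such a weighting only takes the values 0 and k^(n-1), so
   the full labels form a perfect matching of G, necessarily the unique one, M.
   Hence P only uses, at a word x w, the edge labelled by the edge of M at x.
   Along these edges the words form disjoint even cycles, on which P must
   alternate, and P is a free choice of one of the two alternating halves on
   each cycle. The cycles through words starting with the source s of an edge
   (s, t) of M correspond to the orbits of (s, t) on words of length n - 1;
   their canonical representatives s^i y, with y not starting in {s, t}, number
   F(n - 1), where (k - 1) F(m) = (k - 2) k^m + 1, and M has k/2 edges. *)

Lemma card_sep_sum_mem (T : finType) (A : {set T}) (P : pred T) :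
  #|[set x in A | P x]| = \sum_(x | P x) (x \in A).
Proof.
rewrite -sum1dep_card big_mkcond [RHS]big_mkcond.
by apply: eq_bigr => x _; case: (x \in A); case: (P x).
Qed.

Lemma card_sep_sum (T : finType) (A : {set T}) (P : pred T) :
  #|[set x in A | P x]| = \sum_(x in A) P x.
Proof.
rewrite card_sep_sum_mem big_mkcond [RHS]big_mkcond.
by apply: eq_bigr => x _; case: (x \in A); case: (P x).
Qed.

Lemma sum_nat_eq (T : finType) (P : pred T) (a : T) : \sum_(x | P x) (x == a : nat) = P a.
Proof.
rewrite big_mkcond (bigD1 a) //= eqxx big1 => [|x /negbTE ->]; last by case: (P x).
by case: (P a).
Qed.

Lemma tuple_val_eta (T : Type) (n : nat) (u : n.+1.-tuple T) : val u = thead u :: behead u.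
Proof. by rewrite {1}(tuple_eta u). Qed.

Lemma thead_eq (T : Type) (n : nat) (u : n.+1.-tuple T) x w : val u = x :: w -> thead u = x.
Proof. by rewrite tuple_val_eta => -[]. Qed.

Lemma card_tuple_cons (V : finType) (m : nat) (p : V -> seq V -> bool) :
  #|[set v : m.+1.-tuple V | p (thead v) (behead v)]| =
  \sum_x #|[set w : m.-tuple V | p x w]|.
Proof.
pose cons (xw : V * m.-tuple V) := [tuple of xw.1 :: xw.2].
have cons_inj : injective cons.
  by move=> [x w] [x' w'] /(congr1 val) [-> /val_inj ->].
have -> : [set v : m.+1.-tuple V | p (thead v) (behead v)] =
          cons @: [set xw : V * m.-tuple V | p xw.1 xw.2].
  apply/setP => v; rewrite inE; apply/idP/imsetP => [pv|[[x w] pxw ->]].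
    by exists (thead v, [tuple of behead v]); rewrite ?inE // [LHS]tuple_eta.
  by rewrite inE in pxw.
rewrite card_imset // -sum1dep_card; symmetry.
under eq_bigr => x _ do rewrite -(sum1dep_card (fun w : m.-tuple V => p x w)).
exact: (pair_big_dep xpredT (fun x (w : m.-tuple V) => p x w) (fun _ _ => 1)).
Qed.

Section WordAction.
Variables (V : finType) (s t : V).

Fixpoint act_inv (w : seq V) : seq V :=
  match w with
  | [::] => [::]
  | x :: w' => if x == s then t :: w'
               else if x == t then s :: act_inv w' else w
  end.

(* [act_rep w] turns the maximal prefix of [w] over {s, t} into a block of s's:
   the canonical representative of the orbit of [w] under [act s t]. *)
Fixpoint act_rep (w : seq V) : seq V :=
  match w with
  | [::] => [::]
  | x :: w' => if (x == s) || (x == t) then s :: act_rep w' else w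
  end.

Lemma size_act w : size (act s t w) = size w.
Proof. by elim: w => //= x w IH; case: ifP => _ /=; [rewrite IH | case: ifP]. Qed.

Lemma size_act_rep w : size (act_rep w) = size w.
Proof. by elim: w => //= x w IH; case: ifP => _ //=; rewrite IH. Qed.

Hypothesis st : s != t.

Lemma act_cons_src w : act s t (s :: w) = t :: act s t w.
Proof. by rewrite /= eqxx. Qed.

Lemma act_cons_tgt w : act s t (t :: w) = s :: w.
Proof. by rewrite /= eq_sym (negbTE st) eqxx. Qed.

Lemma act_cons_id x w : x != s -> x != t -> act s t (x :: w) = x :: w.
Proof. by move=> /negbTE xs /negbTE xt; rewrite /= xs xt. Qed.

Lemma actK : cancel (act s t) act_inv.
Proof.
elim=> //= x w IH; case: (eqVneq x s) => [->|xs]; first by rewrite /= eq_sym (negbTE st) eqxx IH.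
by case: (eqVneq x t) => [->|xt] /=; rewrite ?eqxx ?(negbTE xs) ?(negbTE xt).
Qed.

Lemma act_inj : injective (act s t).
Proof. exact: can_inj actK. Qed.

Lemma act_cons_fixE x w : (act s t (x :: w) == x :: w) = (x != s) && (x != t).
Proof.
case: (eqVneq x s) => [->|xs]; first by rewrite act_cons_src eqseq_cons eq_sym (negbTE st).
case: (eqVneq x t) => [->|xt]; first by rewrite act_cons_tgt eqseq_cons (negbTE st).
by rewrite act_cons_id ?eqxx.
Qed.

Lemma act_rep_act w : act_rep (act s t w) = act_rep w.
Proof.
elim: w => //= x w IH; case: (eqVneq x s) => [->|xs] /=; first by rewrite !eqxx orbT IH.
case: (eqVneq x t) => [_|xt] /=; first by rewrite eqxx.
by rewrite (negbTE xs) (negbTE xt).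
Qed.

Lemma iter_act_double j w : iter j.*2 (act s t) (s :: w) = s :: iter j (act s t) w.
Proof. by elim: j => //= j ->; rewrite act_cons_src act_cons_tgt. Qed.

Lemma act_rep_iter w : exists j, act_rep w = iter j (act s t) w.
Proof.
elim: w => [|x w [j IH]] /=; first by exists 0.
case: (eqVneq x s) => [->|xs]; first by exists j.*2; rewrite iter_act_double IH.
case: (eqVneq x t) => [->|xt] /=; last by exists 0.
by exists j.*2.+1; rewrite iterSr act_cons_tgt iter_act_double IH.
Qed.

End WordAction.

Section OrbitCount.
Variables (V : finType) (s t : V).
Hypothesis st : s != t.

Lemma card_act_rep_fixedS m :
  #|[set w : m.+1.-tuple V | act_rep s t w == w]| =
  #|[set w : m.-tuple V | act_rep s t w == w]| + (#|V| - 2) * #|V| ^ m.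
Proof.
have -> : [set w : m.+1.-tuple V | act_rep s t w == w] =
          [set v | act_rep s t (thead v :: behead v) == thead v :: behead v].
  by apply/setP => v; rewrite !inE tuple_val_eta.
rewrite (@card_tuple_cons V m (fun x w => act_rep s t (x :: w) == x :: w)).
rewrite (bigD1 s) // (bigD1 t) 1?eq_sym //=; congr (_ + _).
  by apply: eq_card => w; rewrite !inE eqxx /= eqseq_cons eqxx.
have -> : #|[set w : m.-tuple V | act_rep s t (t :: w) == t :: w]| = 0.
  apply/eqP; rewrite cards_eq0; apply/eqP/setP => w.
  by rewrite !inE /= eqxx orbT eqseq_cons; case: eqP st => // ->; rewrite eqxx.
have card_others : #|[pred x | (x != s) && (x != t)]| = #|V| - 2.
  rewrite (@eq_card _ _ (~: [set s; t])) => [|x]; last by rewrite !inE negb_or.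
  by have := cardsC [set s; t]; rewrite cards2 st; lia.
rewrite add0n -card_others -sum_nat_const; apply: eq_bigr => x /andP [/negbTE xs /negbTE xt].
by rewrite -(card_tuple m V) -cardsT; apply: eq_card => w; rewrite !inE /= xs xt eqxx.
Qed.

Lemma card_act_rep_fixed m :
  (#|V| - 1) * #|[set w : m.-tuple V | act_rep s t w == w]| = (#|V| - 2) * #|V| ^ m + 1.
Proof.
have k2 : 2 <= #|V| by have := max_card [set s; t]; rewrite cards2 st.
elim: m => [|m IH]; last by rewrite card_act_rep_fixedS expnS mulnDr IH; nia.
rewrite (_ : #|_| = 1) ?muln1 ?expn0 ?muln1; first by lia.
by apply/eqP/cards1P; exists [tuple]; apply/setP => w; rewrite !inE tuple0 eqxx.
Qed.

End OrbitCount.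

Section TupleAction.
Variables (V : finType) (k : nat) (s t : V).

Lemma act_tupleP (u : k.-tuple V) : size (act s t u) == k.
Proof. by rewrite size_act size_tuple. Qed.
Definition act_tuple (u : k.-tuple V) := Tuple (act_tupleP u).

Lemma act_rep_tupleP (u : k.-tuple V) : size (act_rep s t u) == k.
Proof. by rewrite size_act_rep size_tuple. Qed.
Definition act_rep_tuple (u : k.-tuple V) := Tuple (act_rep_tupleP u).

Lemma iter_act_tuple j (u : k.-tuple V) : val (iter j act_tuple u) = iter j (act s t) u.
Proof. by elim: j => //= j ->. Qed.

End TupleAction.

Section Tree.
Variables (V : finType) (E : seq (V * V)).

Definition incident (v : V) (j : 'I_(size E)) := (v == (edge j).1) || (v == (edge j).2).

(* [tree_has_pm E] is convertible to [exists M, is_pm M]. *)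
Definition is_pm (M : {set 'I_(size E)}) := forall v, #|[set j in M | incident v j]| = 1.

Lemma adj_edge x y : adj E x y -> exists i : 'I_(size E), (edge i == (x, y)) || (edge i == (y, x)).
Proof.
have edge_of p : p \in E -> exists i : 'I_(size E), edge i = p.
  move=> pE; exists (Ordinal (etrans (index_mem p E) pE)).
  by rewrite /edge (tnth_nth p) nth_index.
by case/orP => /edge_of [i <-]; exists i; rewrite eqxx ?orbT.
Qed.

Hypothesis connected : forall x y, connect (adj E) x y.
Hypothesis size_E : size E = #|V|.-1.

Section Rooted.
Variable r : V.

Fixpoint reach k : {set V} :=
  if k is k'.+1 then reach k' :|: [set y | [exists x in reach k', adj E x y]]
  else [set r].

Lemma reach_path p x k : x \in reach k -> path (adj E) x p -> last x p \in reach (k + size p).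
Proof.
elim: p x k => [|y p IH] x k /=; first by rewrite addn0.
move=> xk /andP [xy yp]; rewrite addnS -addSn; apply: IH yp.
by rewrite /= !inE; apply/orP; right; apply/existsP; exists x; rewrite xk.
Qed.

Lemma reach_ex v : exists k, v \in reach k.
Proof.
have /connectP [p pth ->] := connected r v.
by exists (0 + size p); apply: reach_path; rewrite ?inE.
Qed.

Definition dist v := ex_minn (reach_ex v).

Lemma dist_reach v : v \in reach (dist v).
Proof. by rewrite /dist; case: ex_minnP. Qed.

Lemma dist_min v k : v \in reach k -> dist v <= k.
Proof. by rewrite /dist; case: ex_minnP => d _ min_d /min_d. Qed.

Lemma dist_adj x y : adj E x y -> dist y <= (dist x).+1.
Proof.
move=> xy; apply: dist_min; rewrite /= !inE; apply/orP; right.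
by apply/existsP; exists x; rewrite dist_reach.
Qed.

Definition parent v := odflt r [pick u | adj E u v && ((dist u).+1 == dist v)].

Lemma parentP v : v != r -> adj E (parent v) v /\ (dist (parent v)).+1 = dist v.
Proof.
move=> vr; rewrite /parent; case: pickP => [u /andP [uv /eqP] //|no_parent].
have := dist_reach v; case dv: (dist v) => [|d]; first by rewrite inE (negbTE vr).
rewrite /= !inE => /orP [vd|/existsP [u /andP [ud uv]]].
  by have := dist_min vd; rewrite dv ltnn.
have := no_parent u; have := dist_adj uv; have := dist_min ud; rewrite uv dv /=; lia.
Qed.

Definition parent_edge v : option 'I_(size E) :=
  [pick i | (edge i == (parent v, v)) || (edge i == (v, parent v))].

Lemma parent_edgeP v : v != r ->
  exists2 i, parent_edge v = Some i & (edge i == (parent v, v)) || (edge i == (v, parent v)).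
Proof.
move=> vr; rewrite /parent_edge; case: pickP => [i ei|no_edge]; first by exists i.
have [i ei] := adj_edge (parentP vr).1; by have := no_edge i; rewrite ei.
Qed.

Lemma parent_edge_inj : {in [set~ r] &, injective parent_edge}.
Proof.
move=> v v'; rewrite !inE => vr v'r ee.
have [i ei vi] := parent_edgeP vr; have [_ dv] := parentP vr.
have [i' ei' v'i'] := parent_edgeP v'r; have [_ dv'] := parentP v'r.
move: ee v'i'; rewrite ei ei' => -[<-].
case/orP: vi => /eqP -> /orP [] /eqP [h1 h2] //.
  by rewrite h1 in dv; rewrite -h2 in dv'; lia.
by rewrite h2 in dv; rewrite -h1 in dv'; lia.
Qed.

Lemma parent_edge_surj i : exists2 v, v != r & parent_edge v = Some i.
Proof.
(* The tree has as many edges as non-root vertices. *)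
have : Some i \in [set parent_edge v | v in [set~ r]].
  suff -> : [set parent_edge v | v in [set~ r]] = [set Some j | j in 'I_(size E)].
    exact: imset_f.
  apply/eqP; rewrite eqEcard (card_imset _ (@Some_inj _)).
  rewrite (card_in_imset (@parent_edge_inj)).
  rewrite cardsC1 card_ord -size_E leqnn andbT; apply/subsetP => _ /imsetP [v vr ->].
  by rewrite !inE in vr; have [j -> _] := parent_edgeP vr; apply: imset_f.
by case/imsetP => v; rewrite !inE => vr ->; exists v.
Qed.

End Rooted.

Lemma parent_edge_incident r v i : v != r -> parent_edge r v = Some i ->
  (edge i == (parent r v, v)) || (edge i == (v, parent r v)).
Proof. by move=> vr; have [j -> ej [<-]] := parent_edgeP vr. Qed.

Lemma tree_leaf (D : {set 'I_(size E)}) : D != set0 ->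
  exists v i, [/\ i \in D, incident v i & forall j, j \in D -> incident v j -> j = i].
Proof.
(* Root the tree anywhere; the edge of D whose lower endpoint v is farthest from
   the root is the only edge of D at v. *)
case/set0Pn => i1 i1D; set r := (edge i1).1.
pose C v := (v != r) && [exists i in D, parent_edge r v == Some i].
have [v1 v1r e1] := parent_edge_surj r i1.
have Cv1 : C v1 by rewrite /C v1r /=; apply/existsP; exists i1; rewrite e1 eqxx andbT.
case: (arg_maxnP (dist r) Cv1) => v Cv v_max.
move: Cv; rewrite /C => /andP [vr /existsP [i /andP [iD /eqP ev]]].
exists v, i; split=> //.
  by case/orP: (parent_edge_incident vr ev) => /eqP ei; rewrite /incident ei /= eqxx ?orbT.
move=> j jD vj; have [v' v'r ev'] := parent_edge_surj r j.
have Cv' : C v' by rewrite /C v'r /=; apply/existsP; exists j; rewrite ev' eqxx andbT.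
have [_ dv'] := parentP v'r; have := v_max v' Cv'.
move: vj; rewrite /incident; case/orP: (parent_edge_incident v'r ev') => /eqP -> /=.
  by case/orP => /eqP vv'; [rewrite vv' -dv' ltnn | move: ev'; rewrite -vv' ev => -[->]].
by case/orP => /eqP vv'; [move: ev'; rewrite -vv' ev => -[->] | rewrite vv' -dv' ltnn].
Qed.

Lemma regular_weight_0N (w : 'I_(size E) -> nat) N : 0 < N ->
  (forall v, \sum_(j | incident v j) w j = N) -> forall j, (w j == 0) || (w j == N).
Proof.
move=> N_gt0 sum_w.
have w_le j : w j <= N.
  by rewrite -(sum_w (edge j).1) (bigD1 j) /= ?leq_addr // /incident eqxx.
(* At a leaf of the edges of intermediate weight, the weights cannot add up to N. *)
pose D := [set j | 0 < w j < N].
have not_in_D j : j \notin D -> (w j == 0) || (w j == N).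
  by rewrite inE; have := w_le j; lia.
case: (eqVneq D set0) => [D0 j|/tree_leaf [v [i [iD vi i_uniq]]]].
  by apply: not_in_D; rewrite D0 inE.
have {}not_in_D j : incident v j && (j != i) -> (w j == 0) || (w j == N).
  by case/andP => vj ji; apply: not_in_D; apply: contra ji => jD; rewrite (i_uniq j).
move: (sum_w v) iD; rewrite (bigD1 i) //= inE.
case: (boolP [exists j, (incident v j && (j != i)) && (w j == N)]).
  by case/existsP => j /andP [vj /eqP wj]; rewrite (bigD1 j) //= wj; lia.
rewrite negb_exists => /forallP no_N; rewrite big1 => [|j vj]; first by lia.
by have := not_in_D j vj; have := no_N j; rewrite vj /=; lia.
Qed.

Lemma regular_weight_pm (w : 'I_(size E) -> nat) N : 0 < N ->
  (forall v, \sum_(j | incident v j) w j = N) -> is_pm [set j | w j == N].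
Proof.
move=> N_gt0 sum_w v; apply/eqP; rewrite -(eqn_pmul2l N_gt0) muln1 -[X in _ == X](sum_w v).
rewrite card_sep_sum_mem big_distrr /=; apply/eqP; apply: eq_bigr => j _; rewrite inE.
case/orP: (regular_weight_0N N_gt0 sum_w j) => /eqP ->.
  by rewrite eq_sym (gtn_eqF N_gt0) muln0.
by rewrite eqxx muln1.
Qed.

Lemma is_pm_uniq M1 M2 : is_pm M1 -> is_pm M2 -> M1 = M2.
Proof.
move=> pm1 pm2; pose w j := (j \in M1) + (j \in M2).
have sum_w v : \sum_(j | incident v j) w j = 2.
  by rewrite big_split /= -!card_sep_sum_mem pm1 pm2.
apply/setP => j; have := regular_weight_0N (isT : 0 < 2) sum_w j.
by rewrite /w; case: (j \in M1); case: (j \in M2).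
Qed.

End Tree.

Section AlternatingSets.
Variables (T : finType) (f : T -> T) (parity : pred T) (rep : T -> T).
Hypothesis parity_f : forall u, parity (f u) = ~~ parity u.
Hypothesis rep_f : forall u, rep (f u) = rep u.
Hypothesis parity_rep : forall u, parity (rep u).
Hypothesis rep_orbit : forall u, exists j, rep u = iter j f u.

Definition alternating (S : {set T}) := [forall u, (f u \in S) == (u \notin S)].

Lemma rep_iter j u : rep (iter j f u) = rep u.
Proof. by elim: j => //= j IH; rewrite rep_f. Qed.

Lemma repK u : rep (rep u) = rep u.
Proof. by have [j rep_u] := rep_orbit u; rewrite {1}rep_u rep_iter. Qed.

(* [u \in S] differs from [parity u] by an [f]-invariant, hence by its value at [rep u]. *)
Lemma alternating_rep S u : alternating S -> (u \in S) = ((rep u \in S) == parity u).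
Proof.
move/forallP=> altS; have inv v : ((f v \in S) == parity (f v)) = ((v \in S) == parity v).
  by rewrite (eqP (altS v)) parity_f; case: (v \in S); case: (parity v).
have inv_iter j : ((iter j f u \in S) == parity (iter j f u)) = ((u \in S) == parity u).
  by elim: j => //= j <-; apply: inv.
have [j rep_u] := rep_orbit u; have := inv_iter j; rewrite -rep_u parity_rep eqb_id => ->.
by case: (u \in S); case: (parity u).
Qed.

Lemma card_alternating : #|[set S | alternating S]| = 2 ^ #|[set u | rep u == u]|.
Proof.
set R := [set u | rep u == u].
pose extend (A : {set T}) := [set u | (rep u \in A) == parity u].
have extendK (A : {set T}) : A \subset R -> extend A :&: R = A.
  move=> AR; apply/setP => u; rewrite !inE.
  case: (eqVneq (rep u) u) => [ru|not_ru]; rewrite ?andbT ?andbF.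
    have pu : parity u by rewrite -ru parity_rep.
    by rewrite ru pu eqb_id.
  by apply/esym/negP => /(subsetP AR); rewrite inE (negbTE not_ru).
rewrite -card_powerset -(card_in_imset (f := extend) (D := powerset R)); last first.
  by move=> A B; rewrite !powersetE => AR BR eqAB; rewrite -(extendK A) // eqAB extendK.
congr #|pred_of_set _|; apply/setP => S; rewrite inE; apply/idP/imsetP => [altS|[A _ ->]].
  exists (S :&: R); first by rewrite powersetE subsetIr.
  by apply/setP => u; rewrite [LHS](alternating_rep u altS) /R !inE repK eqxx andbT.
by apply/forallP => u; rewrite !inE rep_f parity_f; case: (_ \in A); case: (parity u).
Qed.

End AlternatingSets.

Section Schreier.
Variables (V : finType) (E : seq (V * V)) (m : nat).
Local Notation word := (m.+1.-tuple V).
Hypothesis edge_proper : forall i : 'I_(size E), (edge i).1 != (edge i).2.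

Lemma sincidentE (v u : word) (j : 'I_(size E)) :
  sincident v (u, j) = (v == u) || (v == act_tuple (edge j).1 (edge j).2 u).
Proof. by rewrite /sincident -val_eqE. Qed.

Lemma sloopE (u : word) (j : 'I_(size E)) :
  sloop (u, j) = (act_tuple (edge j).1 (edge j).2 u == u).
Proof. by rewrite /sloop -val_eqE. Qed.

Lemma thead_act_tuple s t (u : word) : s != t -> (thead u == s) || (thead u == t) ->
  thead (act_tuple s t u) = if thead u == s then t else s.
Proof.
move=> st /orP [] /eqP us; apply: thead_eq; rewrite /= tuple_val_eta us.
  by rewrite act_cons_src eqxx.
by rewrite act_cons_tgt // eq_sym (negbTE st).
Qed.

Lemma sloop_incident (u : word) (j : 'I_(size E)) : ~~ sloop (u, j) -> incident (thead u) j.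
Proof.
by rewrite sloopE -val_eqE /= tuple_val_eta act_cons_fixE ?edge_proper // negb_and !negbK.
Qed.

Lemma sum_sincident_head (y : sedge E m.+1) x : ~~ sloop y ->
  \sum_(v : word | thead v == x) sincident v y = incident x y.2.
Proof.
(* The two ends of a non-loop edge labelled (s, t) start with s and t. *)
case: y => u j /= nl; have uj := sloop_incident nl; move: nl.
rewrite sloopE; set a := act_tuple _ _ u => au.
rewrite (eq_bigr (fun v => (v == u) + (v == a))) => [|v _]; last first.
  by rewrite sincidentE; case: (eqVneq v u) => // ->; rewrite [u == a]eq_sym (negbTE au).
rewrite big_split /= !sum_nat_eq /a thead_act_tuple ?edge_proper //.
move: (edge_proper j) uj; rewrite /incident; set s := (edge j).1; set t := (edge j).2 => st.
case/orP=> /eqP ->; rewrite ?[t == s]eq_sym ?(negbTE st) ?eqxx /= ![_ == x]eq_sym.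
  by case: (eqVneq x s) => [->|]; rewrite ?(negbTE st).
by rewrite addnC; case: (eqVneq x s) => [->|]; rewrite ?(negbTE st).
Qed.

Lemma card_words_gt0 (x : V) : 0 < #|V| ^ m.
Proof. by rewrite expn_gt0; apply/orP; left; apply/card_gt0P; exists x. Qed.

Lemma card_thead (x : V) : #|[set v : word | thead v == x]| = #|V| ^ m.
Proof.
rewrite (@card_tuple_cons V m (fun y _ => y == x)) (bigD1 x) //= big1 => [|y /negbTE yx].
  by rewrite addn0 -(card_tuple m V) -cardsT; apply: eq_card => w; rewrite !inE eqxx.
by apply/eqP; rewrite cards_eq0; apply/eqP/setP => w; rewrite !inE yx.
Qed.

Definition label_mult (P : {set sedge E m.+1}) (j : 'I_(size E)) := #|[set y in P | y.2 == j]|.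

Lemma sum_label_mult P x : schreier_pm P ->
  \sum_(j | incident x j) label_mult P j = #|V| ^ m.
Proof.
case/andP => /forallP nonloop /forallP cover.
rewrite -(card_thead x) -sum1dep_card.
transitivity (\sum_(v : word | thead v == x) \sum_(y in P) (sincident v y : nat)); last first.
  by apply: eq_bigr => v _; rewrite -card_sep_sum (eqP (cover v)).
rewrite exchange_big /=.
under [RHS]eq_bigr => y yP do
  rewrite sum_sincident_head ?(implyP (nonloop y)) // -(sum_nat_eq (incident x) y.2).
rewrite exchange_big /=; apply: eq_bigr => j _.
by rewrite /label_mult card_sep_sum; apply: eq_bigr => y _; rewrite eq_sym.
Qed.

Hypothesis connected : forall x y, connect (adj E) x y.
Hypothesis size_E : size E = #|V|.-1.

Lemma schreier_pm_label_pm P : schreier_pm P -> is_pm [set j | label_mult P j == #|V| ^ m].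
Proof.
move=> pmP v; apply: (regular_weight_pm connected size_E (card_words_gt0 v)) => x.
exact: sum_label_mult.
Qed.

Lemma label_mult_0N P j : schreier_pm P ->
  (label_mult P j == 0) || (label_mult P j == #|V| ^ m).
Proof.
move=> pmP; apply: (regular_weight_0N connected size_E (card_words_gt0 (edge j).1)) => x.
exact: sum_label_mult.
Qed.

Section MatchedTree.
Variable M0 : {set 'I_(size E)}.
Hypothesis pm_M0 : is_pm M0.

Lemma pm_edge_ex x : exists j, (j \in M0) && incident x j.
Proof.
have /eqP/cards1P [j ej] := pm_M0 x; exists j.
have : j \in [set j in M0 | incident x j] by rewrite ej inE.
by rewrite inE.
Qed.

Definition lab x := xchoose (pm_edge_ex x).
Definition src x := (edge (lab x)).1.
Definition tgt x := (edge (lab x)).2.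

Lemma labP x : (lab x \in M0) && incident x (lab x).
Proof. exact: (xchooseP (pm_edge_ex x)). Qed.

Lemma lab_uniq x j : j \in M0 -> incident x j -> j = lab x.
Proof.
move=> jM xj; have /eqP/cards1P [i ei] := pm_M0 x.
have : j \in [set j in M0 | incident x j] by rewrite inE jM xj.
have : lab x \in [set j in M0 | incident x j] by rewrite inE labP.
by rewrite ei !inE => /eqP -> /eqP ->.
Qed.

Lemma src_neq_tgt x : src x != tgt x.
Proof. exact: edge_proper. Qed.

Lemma src_or_tgt x : (x == src x) || (x == tgt x).
Proof. by case/andP: (labP x). Qed.

Lemma lab_src x : lab (src x) = lab x.
Proof. by case/andP: (labP x) => xM _; apply/esym/lab_uniq; rewrite // /incident eqxx. Qed.

Lemma lab_tgt x : lab (tgt x) = lab x.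
Proof. by case/andP: (labP x) => xM _; apply/esym/lab_uniq; rewrite // /incident eqxx orbT. Qed.

Lemma src_src x : src (src x) = src x.
Proof. by rewrite /src lab_src. Qed.

Lemma src_tgt x : src (tgt x) = src x.
Proof. by rewrite /src lab_tgt. Qed.

Definition matched_edge (u : word) : sedge E m.+1 := (u, lab (thead u)).
Definition step (u : word) : word := act_tuple (src (thead u)) (tgt (thead u)) u.

Lemma thead_step u :
  thead (step u) = if thead u == src (thead u) then tgt (thead u) else src (thead u).
Proof. exact: thead_act_tuple (src_neq_tgt _) (src_or_tgt _). Qed.

Lemma lab_step u : lab (thead (step u)) = lab (thead u).
Proof. by rewrite thead_step; case: ifP; rewrite ?lab_src ?lab_tgt. Qed.

Lemma src_step u : src (thead (step u)) = src (thead u).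
Proof. by rewrite /src lab_step. Qed.

Lemma tgt_step u : tgt (thead (step u)) = tgt (thead u).
Proof. by rewrite /tgt lab_step. Qed.

Lemma step_inj : injective step.
Proof.
move=> u u' eq_step; have := congr1 (fun v => lab (thead v)) eq_step; rewrite !lab_step.
move: eq_step; rewrite /step /src /tgt => + lab_eq; rewrite lab_eq.
by move/(congr1 val)/(act_inj (edge_proper _))/val_inj.
Qed.

Lemma matched_edge_nonloop u : ~~ sloop (matched_edge u).
Proof.
rewrite sloopE -val_eqE /= tuple_val_eta act_cons_fixE ?edge_proper //.
by rewrite negb_and !negbK src_or_tgt.
Qed.

Lemma step_neq u : step u != u.
Proof. by have := matched_edge_nonloop u; rewrite sloopE. Qed.

Lemma card_incident_matched (S : {set word}) v :
  #|[set y in matched_edge @: S | sincident v y]| = (v \in S) + (finv step v \in S).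
Proof.
have matched_inj : injective matched_edge by move=> u u' [].
have v_neq : v != finv step v.
  by apply: contraNneq (step_neq (finv step v)) => {1}->; rewrite f_finv //; exact: step_inj.
rewrite card_sep_sum big_imset /=; last by move=> u u' _ _; apply: matched_inj.
rewrite (eq_bigr (fun u => (u == v) + (u == finv step v))) => [|u _].
  by rewrite big_split /= !sum_nat_eq.
rewrite sincidentE -/(step u) eq_sym; have -> : (v == step u) = (u == finv step v).
  by apply/eqP/eqP => [->|->]; rewrite ?finv_f ?f_finv //; exact: step_inj.
by case: (eqVneq u v) => [->|//]; rewrite (negbTE v_neq).
Qed.

Lemma schreier_pm_matched (S : {set word}) :
  schreier_pm (matched_edge @: S) = alternating step S.
Proof.
apply/andP/forallP => [[_ /forallP pmS] u | altS].
  have := pmS (step u); rewrite card_incident_matched finv_f; last exact: step_inj.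
  by case: (step u \in S); case: (u \in S).
split.
  by apply/forallP => y; apply/implyP => /imsetP [u _ ->]; apply: matched_edge_nonloop.
apply/forallP => v; rewrite card_incident_matched.
have := altS (finv step v); rewrite f_finv; last exact: step_inj.
by case: (v \in S); case: (finv step v \in S).
Qed.

Lemma schreier_pm_matched_edge P y : schreier_pm P -> y \in P -> y = matched_edge y.1.
Proof.
(* The labels used by P are those of full multiplicity, i.e. the edges of M0. *)
move=> pmP yP; have M0E := is_pm_uniq connected size_E (schreier_pm_label_pm pmP) pm_M0.
have y_nonloop : ~~ sloop y by case/andP: pmP => /forallP /(_ y) /implyP /(_ yP).
have yM : y.2 \in M0.
  have mult_gt0 : 0 < label_mult P y.2 by apply/card_gt0P; exists y; rewrite inE yP eqxx.
  rewrite -M0E inE; case/orP: (label_mult_0N y.2 pmP) => // /eqP mult0.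
  by rewrite mult0 in mult_gt0.
case: y yP y_nonloop yM => u j /= _ nl jM; congr pair; apply: lab_uniq jM _.
exact: sloop_incident nl.
Qed.

Lemma schreier_pm_matchedE P :
  schreier_pm P -> P = matched_edge @: [set u | matched_edge u \in P].
Proof.
move=> pmP; apply/setP => y; apply/idP/imsetP => [yP|[u + ->]]; last by rewrite inE.
by exists y.1; rewrite ?inE -(schreier_pm_matched_edge pmP yP).
Qed.

Lemma card_schreier_pm_alternating :
  #|[set M : {set sedge E m.+1} | schreier_pm M]| = #|[set S | alternating step S]|.
Proof.
have matched_inj : injective matched_edge by move=> u u' [].
rewrite -(card_imset _ (imset_inj matched_inj)); congr #|pred_of_set _|.
apply/setP => M; rewrite inE; apply/idP/imsetP => [pmM|[S + ->]].
  exists [set u | matched_edge u \in M]; last exact: schreier_pm_matchedE.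
  by rewrite inE -schreier_pm_matched -schreier_pm_matchedE.
by rewrite !inE schreier_pm_matched.
Qed.

Definition at_src (u : word) := thead u == src (thead u).
Definition rep (u : word) : word := act_rep_tuple (src (thead u)) (tgt (thead u)) u.

Lemma at_src_step u : at_src (step u) = ~~ at_src u.
Proof.
rewrite /at_src thead_step; case: ifP => _; last by rewrite src_src eqxx.
by rewrite src_tgt eq_sym (negbTE (src_neq_tgt _)).
Qed.

Lemma rep_step u : rep (step u) = rep u.
Proof. by apply: val_inj; rewrite /rep /= src_step tgt_step act_rep_act. Qed.

Lemma at_src_rep u : at_src (rep u).
Proof.
rewrite /at_src; have -> : thead (rep u) = src (thead u).
  by apply: thead_eq; rewrite /= tuple_val_eta /= src_or_tgt.
by rewrite src_src eqxx.
Qed.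

Lemma lab_iter_step j u : lab (thead (iter j step u)) = lab (thead u).
Proof. by elim: j => //= j IH; rewrite lab_step. Qed.

Lemma iter_step j u : iter j step u = iter j (act_tuple (src (thead u)) (tgt (thead u))) u.
Proof. by elim: j => //= j IH; rewrite {1}/step /src /tgt lab_iter_step IH. Qed.

Lemma rep_orbit u : exists j, rep u = iter j step u.
Proof.
have [j rep_u] := act_rep_iter (src_neq_tgt (thead u)) u.
by exists j; apply: val_inj; rewrite iter_step iter_act_tuple.
Qed.

Lemma card_schreier_pm :
  #|[set M : {set sedge E m.+1} | schreier_pm M]| = 2 ^ #|[set u | rep u == u]|.
Proof.
rewrite card_schreier_pm_alternating.
exact: card_alternating at_src_step rep_step at_src_rep rep_orbit.
Qed.

Lemma card_src : 2 * #|[set x | x == src x]| = #|V|.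
Proof.
set S := [set x | x == src x]; rewrite -(cardsC S) mul2n -addnn; congr (_ + _).
have -> : ~: S = tgt @: S.
  apply/setP => y; rewrite !inE; apply/idP/imsetP => [y_tgt|[x xS ->]].
    exists (src y); first by rewrite inE src_src.
    by rewrite /tgt lab_src; case/orP: (src_or_tgt y) y_tgt => [-> // | /eqP].
  by rewrite src_tgt eq_sym src_neq_tgt.
rewrite card_in_imset // => x x'; rewrite !inE => /eqP xs /eqP x's tx.
by rewrite xs x's /src -lab_tgt tx lab_tgt.
Qed.

Lemma card_rep_fixed : (#|V| - 1) * #|[set u : word | rep u == u]| =
  #|[set x | x == src x]| * ((#|V| - 2) * #|V| ^ m + 1).
Proof.
have -> : [set u : word | rep u == u] = [set u | (thead u == src (thead u)) &&
    (act_rep (src (thead u)) (tgt (thead u)) (behead u) == behead u)].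
  by apply/setP => u; rewrite !inE -val_eqE /= tuple_val_eta /= src_or_tgt eqseq_cons eq_sym.
rewrite (@card_tuple_cons V m (fun x w => (x == src x) && (act_rep (src x) (tgt x) w == w))).
rewrite big_distrr /= (bigID (fun x => x == src x)) /= [X in _ + X]big1 => [|x /negbTE xs].
  rewrite addn0 -sum1dep_card big_distrl /=; apply: eq_bigr => x xs; rewrite mul1n.
  rewrite -(card_act_rep_fixed (src_neq_tgt x)); congr (_ * _).
  by apply: eq_card => w; rewrite !inE xs.
by apply/eqP; rewrite muln_eq0 cards_eq0; apply/orP; right; apply/eqP/setP => w; rewrite !inE xs.
Qed.

End MatchedTree.

End Schreier.

Theorem theorem3p4 (V : finType) (E : seq (V * V)) (n : nat) :
  2 <= #|V| -> 1 <= n -> is_tree E ->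
  (tree_has_pm E ->
     exists e : nat,
       (2 * (#|V| - 1)) * e = #|V| * (#|V| ^ n - 2 * #|V| ^ n.-1 + 1) /\
       #|[set M : {set sedge E n} | schreier_pm M]| = 2 ^ e) /\
  (~ tree_has_pm E ->
     forall M : {set sedge E n}, ~~ schreier_pm M).
Proof.
move=> _ n_gt0 [_ no_loop _ connected size_E]; case: n n_gt0 => [//|m] _.
have edge_proper (i : 'I_(size E)) : (edge i).1 != (edge i).2.
  by have := mem_tnth i (in_tuple E); rewrite -/(edge i); case: (edge i) => x y /no_loop.
split=> [[M0 pm_M0] | no_pm M].
  exists #|[set u | @rep _ _ m _ pm_M0 u == u]|; split; last exact: card_schreier_pm.
  rewrite -mulnA (card_rep_fixed m edge_proper pm_M0) mulnA (card_src edge_proper pm_M0).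
  by rewrite /= expnS mulnBl.
apply/negP => pm_M; apply: no_pm.
by exists [set j | label_mult M j == #|V| ^ m]; apply: schreier_pm_label_pm.
Qed.
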